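(* Let $X, Y \subseteq \omega$. There exists an embedding $\mathcal{K}^X_2 \hookrightarrow \mathcal{K}^Y_2$ if and only if $X \le_T Y$.
   Context: A pca is a set with a partial binary application operation containing distinct $\mathrm{s},\mathrm{k}$ with $\mathrm{k}ab\downarrow=a$, $\mathrm{s}ab\downarrow$, $\mathrm{s}abc\simeq(ac)(bc)$. An embedding of pcas is an injective map $f$ with: if $ab$ is defined then $f(a)f(b)$ is defined and equals $f(ab)$. $\mathcal{K}_2^Z$: elements are the total $Z$-computable functions $g:\omega\to\omega$, with $g\cdot h$ the function $n\mapsto\Phi^{g\oplus h}_{g(0)}(n)$ ($\Phi_e$ the $e$-th Turing functional, $(g\oplus h)(2n)=g(n)$, $(g\oplus h)(2n+1)=h(n)$), defined if and only if this function is total. *)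

From HB Require Import structures.
From mathcomp Require Import all_boot.
From Stdlib Require Import Cantor.

Set Implicit Arguments.
Unset Strict Implicit.
Unset Printing Implicit Defensive.

Definition cpair (x y : nat) : nat := Cantor.to_nat (x, y).
Definition cfst (n : nat) : nat := fst (Cantor.of_nat n).
Definition csnd (n : nat) : nat := snd (Cantor.of_nat n).

(* Unary partial recursive function terms relative to an oracle
   (a standard Turing-complete basis over a pairing function). *)
Inductive prog : Type :=
| PZero
| PSucc
| PId
| POrc
| PFst
| PSnd
| PComp of prog & prog       (* PComp h g : x |-> h (g x) *)
| PPair of prog & prog
| PRec of prog & prog
| PMu of prog.

Fixpoint prog_enc (p : prog) : GenTree.tree unit :=
  match p with
  | PZero => GenTree.Node 0 [::]
  | PSucc => GenTree.Node 1 [::]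
  | PId => GenTree.Node 2 [::]
  | POrc => GenTree.Node 3 [::]
  | PFst => GenTree.Node 4 [::]
  | PSnd => GenTree.Node 5 [::]
  | PComp a b => GenTree.Node 6 [:: prog_enc a; prog_enc b]
  | PPair a b => GenTree.Node 7 [:: prog_enc a; prog_enc b]
  | PRec a b => GenTree.Node 8 [:: prog_enc a; prog_enc b]
  | PMu a => GenTree.Node 9 [:: prog_enc a]
  end.

Fixpoint prog_dec (t : GenTree.tree unit) : option prog :=
  match t with
  | GenTree.Leaf _ => None
  | GenTree.Node 0 [::] => Some PZero
  | GenTree.Node 1 [::] => Some PSucc
  | GenTree.Node 2 [::] => Some PId
  | GenTree.Node 3 [::] => Some POrc
  | GenTree.Node 4 [::] => Some PFst
  | GenTree.Node 5 [::] => Some PSnd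
  | GenTree.Node 6 [:: a; b] =>
      match prog_dec a, prog_dec b with Some x, Some y => Some (PComp x y) | _, _ => None end
  | GenTree.Node 7 [:: a; b] =>
      match prog_dec a, prog_dec b with Some x, Some y => Some (PPair x y) | _, _ => None end
  | GenTree.Node 8 [:: a; b] =>
      match prog_dec a, prog_dec b with Some x, Some y => Some (PRec x y) | _, _ => None end
  | GenTree.Node 9 [:: a] =>
      match prog_dec a with Some x => Some (PMu x) | None => None end
  | _ => None
  end.

Lemma prog_encK : pcancel prog_enc prog_dec.
Proof. by elim=> //= [a -> b ->|a -> b ->|a -> b ->|a ->]. Qed.

HB.instance Definition _ := Countable.copy prog (pcan_type prog_encK).

Inductive eval (f : nat -> nat) : prog -> nat -> nat -> Prop :=
| eZero x : eval f PZero x 0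
| eSucc x : eval f PSucc x x.+1
| eId x : eval f PId x x
| eOrc x : eval f POrc x (f x)
| eFst x : eval f PFst x (cfst x)
| eSnd x : eval f PSnd x (csnd x)
| eComp h g x y z : eval f g x y -> eval f h y z -> eval f (PComp h g) x z
| ePair a b x u v : eval f a x u -> eval f b x v -> eval f (PPair a b) x (cpair u v)
| eRec0 b s x v : eval f b x v -> eval f (PRec b s) (cpair x 0) v
| eRecS b s x y r v :
    eval f (PRec b s) (cpair x y) r ->
    eval f s (cpair x (cpair y r)) v ->
    eval f (PRec b s) (cpair x y.+1) v
| eMu t x y :
    eval f t (cpair x y) 0 ->
    (forall z, z < y -> exists w, eval f t (cpair x z) w /\ w <> 0) ->
    eval f (PMu t) x y.

(* Acceptable numbering of programs: e |-> the e-th program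
   (codes not denoting a program denote the nowhere-defined program). *)
Definition prog_of_index (e : nat) : prog :=
  match unpickle e with Some p => p | None => PMu PSucc end.

Definition Phi (e : nat) (f : nat -> nat) (n v : nat) : Prop :=
  eval f (prog_of_index e) n v.

(* Sets of naturals are represented by boolean predicates. *)
Definition chi (Z : nat -> bool) (n : nat) : nat := nat_of_bool (Z n).

Definition Zcomputable (Z : nat -> bool) (g : nat -> nat) : Prop :=
  exists e, forall n, Phi e (chi Z) n (g n).

Definition Treducible (X Y : nat -> bool) : Prop := Zcomputable Y (chi X).

Definition join (g h : nat -> nat) (n : nat) : nat :=
  if odd n then h n./2 else g n./2.

Definition K2 (Z : nat -> bool) : Type := {g : nat -> nat | Zcomputable Z g}.

(* Partial application of K_2^Z as a relation: [K2app a b c] iff a.b is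
   defined (i.e. n |-> Phi_{a(0)}^{a (+) b}(n) is total) and equals c. *)
Definition K2app (Z : nat -> bool) (a b c : K2 Z) : Prop :=
  forall n, Phi (proj1_sig a 0) (join (proj1_sig a) (proj1_sig b)) n (proj1_sig c n).

Definition K2_embedding (X Y : nat -> bool) (f : K2 X -> K2 Y) : Prop :=
  injective f /\
  forall a b c : K2 X, K2app a b c -> K2app (f a) (f b) (f c).

(* If X <=_T Y, every X-computable function is Y-computable, so the inclusion
   K_2^X -> K_2^Y is an embedding.  Conversely, let f embed K_2^X into K_2^Y.
   K_2^X contains numerals [n] (the constants 2n+2), an element s with
   s.[n] = [n+1], and an element x with x.[n] = the constant chi_X(n).  By the
   use principle, application in K_2^Y is Y-computable uniformly in finite
   tables of its right argument; iterating f(s) from f([0]) therefore makes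
   (n, m) |-> f([n])(m) Y-computable, and applying f(x) then makes
   (n, m) |-> f(chi_X(n))(m) Y-computable.  Since f is injective, the images of
   the constants 0 and 1 differ at some point m0, and comparing
   f(chi_X(n))(m0) with f(1)(m0) decides X from Y. *)

From mathcomp Require Import all_boot zify.
From Stdlib Require Import Classical FunctionalExtensionality ProofIrrelevance.

Set Implicit Arguments.
Unset Strict Implicit.
Unset Printing Implicit Defensive.

Lemma cfst_pair a b : cfst (cpair a b) = a.
Proof. by rewrite /cfst /cpair Cantor.cancel_of_to. Qed.

Lemma csnd_pair a b : csnd (cpair a b) = b.
Proof. by rewrite /csnd /cpair Cantor.cancel_of_to. Qed.

Lemma cpair_eta c : cpair (cfst c) (csnd c) = c.
Proof. by rewrite /cfst /csnd /cpair -surjective_pairing Cantor.cancel_to_of. Qed.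

(* [eval_ind] provides no induction hypothesis for the computations
   quantified inside the premise of [eMu]. *)
Section EvalNestedInd.
Variables (f : nat -> nat) (P : prog -> nat -> nat -> Prop).
Hypothesis HZero : forall x, P PZero x 0.
Hypothesis HSucc : forall x, P PSucc x x.+1.
Hypothesis HId : forall x, P PId x x.
Hypothesis HOrc : forall x, P POrc x (f x).
Hypothesis HFst : forall x, P PFst x (cfst x).
Hypothesis HSnd : forall x, P PSnd x (csnd x).
Hypothesis HComp : forall h g x y z,
  eval f g x y -> P g x y -> eval f h y z -> P h y z -> P (PComp h g) x z.
Hypothesis HPair : forall a b x u v,
  eval f a x u -> P a x u -> eval f b x v -> P b x v -> P (PPair a b) x (cpair u v).
Hypothesis HRec0 : forall b s x v, eval f b x v -> P b x v -> P (PRec b s) (cpair x 0) v.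
Hypothesis HRecS : forall b s x y r v,
  eval f (PRec b s) (cpair x y) r -> P (PRec b s) (cpair x y) r ->
  eval f s (cpair x (cpair y r)) v -> P s (cpair x (cpair y r)) v ->
  P (PRec b s) (cpair x y.+1) v.
Hypothesis HMu : forall t x y, eval f t (cpair x y) 0 -> P t (cpair x y) 0 ->
  (forall z, z < y -> exists w, [/\ eval f t (cpair x z) w, w <> 0 & P t (cpair x z) w]) ->
  P (PMu t) x y.

Fixpoint eval_nested_ind p x v (H : eval f p x v) {struct H} : P p x v :=
  match H in eval _ p x v return P p x v with
  | eZero x => HZero x
  | eSucc x => HSucc x
  | eId x => HId x
  | eOrc x => HOrc x
  | eFst x => HFst x
  | eSnd x => HSnd x
  | eComp _ _ _ _ _ H1 H2 => HComp H1 (eval_nested_ind H1) H2 (eval_nested_ind H2)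
  | ePair _ _ _ _ _ H1 H2 => HPair H1 (eval_nested_ind H1) H2 (eval_nested_ind H2)
  | eRec0 _ s _ _ H1 => HRec0 s H1 (eval_nested_ind H1)
  | eRecS _ _ _ _ _ _ H1 H2 => HRecS H1 (eval_nested_ind H1) H2 (eval_nested_ind H2)
  | eMu _ _ _ H1 H2 => HMu H1 (eval_nested_ind H1) (fun z hz =>
      let: ex_intro w (conj Hw Hw0) := H2 z hz in
      ex_intro _ w (And3 Hw Hw0 (eval_nested_ind Hw)))
  end.

End EvalNestedInd.

(** * Computability relative to an oracle *)

Definition computable (o F : nat -> nat) := exists p, forall x, eval o p x (F x).

Notation computable2 o F := (computable o (fun d => F (cfst d) (csnd d))).

Lemma eq_computable o F G : F =1 G -> computable o F -> computable o G.
Proof. by move=> eFG [p Hp]; exists p => x; rewrite -eFG. Qed.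

Fixpoint subst_oracle (p q : prog) : prog :=
  match p with
  | POrc => q
  | PComp a b => PComp (subst_oracle a q) (subst_oracle b q)
  | PPair a b => PPair (subst_oracle a q) (subst_oracle b q)
  | PRec a b => PRec (subst_oracle a q) (subst_oracle b q)
  | PMu a => PMu (subst_oracle a q)
  | _ => p
  end.

Lemma eval_subst_oracle o o' q p x v : (forall n, eval o' q n (o n)) ->
  eval o p x v -> eval o' (subst_oracle p q) x v.
Proof.
move=> Hq; elim/eval_nested_ind => /=;
  try by move=> *; first [exact: Hq | econstructor; eauto].
move=> t x0 y _ IH0 Hlt; constructor=> // z /Hlt[w [_ Hw0 IHw]].
by exists w.
Qed.

Lemma computable_trans o o' F : computable o' o -> computable o F -> computable o' F.
Proof.
by move=> [q Hq] [p Hp]; exists (subst_oracle p q) => x; apply: eval_subst_oracle.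
Qed.

Definition ncase (n a : nat) (b : nat -> nat) : nat :=
  if n is k.+1 then b k else a.

Section Closure.
Variable o : nat -> nat.
Implicit Types (A B N F G : nat -> nat).

Lemma computable_id : computable o (fun c => c).
Proof. by exists PId => x; constructor. Qed.

Lemma computable_comp G F :
  computable o G -> computable o F -> computable o (fun c => G (F c)).
Proof. by move=> [p Hp] [q Hq]; exists (PComp p q) => x; econstructor. Qed.

Lemma computable_oracle A : computable o A -> computable o (fun c => o (A c)).
Proof. by apply: computable_comp; exists POrc => x; constructor. Qed.

Lemma computable_succ A : computable o A -> computable o (fun c => (A c).+1).
Proof. by apply: computable_comp; exists PSucc => x; constructor. Qed.

Lemma computable_fst A : computable o A -> computable o (fun c => cfst (A c)).
Proof. by apply: computable_comp; exists PFst => x; constructor. Qed.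

Lemma computable_snd A : computable o A -> computable o (fun c => csnd (A c)).
Proof. by apply: computable_comp; exists PSnd => x; constructor. Qed.

Lemma computable_const k : computable o (fun _ => k).
Proof.
elim: k => [|k /computable_succ //]; by exists PZero => x; constructor.
Qed.

Lemma computable_pair A B :
  computable o A -> computable o B -> computable o (fun c => cpair (A c) (B c)).
Proof. by move=> [p Hp] [q Hq]; exists (PPair p q) => x; constructor. Qed.

Lemma computable_app2 (F : nat -> nat -> nat) A B :
  computable2 o F -> computable o A -> computable o B -> computable o (fun c => F (A c) (B c)).
Proof.
move=> HF HA HB; apply: eq_computable (computable_comp HF (computable_pair HA HB)) => c.
by rewrite cfst_pair csnd_pair.
Qed.

Lemma computable_iteri N (S : nat -> nat -> nat -> nat) B :
  computable o N -> computable o (fun d => S (cfst d) (cfst (csnd d)) (csnd (csnd d))) ->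
  computable o B -> computable o (fun c => iteri (N c) (fun i r => S c i r) (B c)).
Proof.
move=> HN [s Hs] [b Hb].
have HR : computable2 o (fun c n => iteri n (S c) (B c)).
  exists (PRec b s) => d /=; rewrite -{1}(cpair_eta d).
  elim: (csnd d) => [|n IH]; first exact: eRec0 (Hb _).
  apply: (eRecS IH); have := Hs (cpair (cfst d) (cpair n (iteri n (S (cfst d)) (B (cfst d))))).
  by rewrite csnd_pair !cfst_pair csnd_pair.
exact: (computable_app2 (F := fun c n => iteri n (S c) (B c))) HR computable_id HN.
Qed.

Lemma computable_ncase N A (B : nat -> nat -> nat) :
  computable o N -> computable o A -> computable2 o B ->
  computable o (fun c => ncase (N c) (A c) (fun k => B c k)).
Proof.
move=> HN HA HB.
have HI : computable o (fun c => iteri (N c) (fun i _ => B c i) (A c)).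
  apply: computable_iteri => //.
  exact: computable_app2 HB (computable_fst computable_id)
    (computable_fst (computable_snd computable_id)).
by apply: eq_computable HI => c; case: (N c).
Qed.

Lemma computable_minn (R : nat -> nat -> nat) (ex : forall x, exists y, R x y == 0) :
  computable2 o R -> computable o (fun x => ex_minn (ex x)).
Proof.
move=> [p Hp]; exists (PMu p) => x; case: ex_minnP => y /eqP Ry miny.
constructor; first by rewrite -Ry -{2}(csnd_pair x y) -{2}(cfst_pair x y).
move=> z ltzy; exists (R x z); split.
  by have := Hp (cpair x z); rewrite cfst_pair csnd_pair.
by move=> /eqP /miny; rewrite leqNgt ltzy.
Qed.

End Closure.

Create HintDb computable.
#[export] Hint Resolve computable_id computable_const computable_succ computable_fst
  computable_snd computable_pair computable_oracle computable_ncase computable_iteri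
  : computable.
#[export] Hint Extern 5 (computable _ (fun _ => _ (_ _))) =>
  (apply: computable_comp; first eassumption) : computable.
#[export] Hint Extern 5 (computable _ (fun _ => _ _ _)) =>
  (eapply computable_app2; first eassumption) : computable.
#[export] Hint Extern 0 (computable _ _) => progress cbv beta : computable.

Ltac computable_solve := solve [auto 100 with computable].

Lemma computable_pred o A : computable o A -> computable o (fun c => (A c).-1).
Proof.
move=> HA; have : computable o (fun c => ncase (A c) 0 (fun k => k)) by computable_solve.
by apply: eq_computable => c; case: (A c).
Qed.
#[export] Hint Resolve computable_pred : computable.

Lemma computable_sub o A B :
  computable o A -> computable o B -> computable o (fun c => A c - B c).
Proof.
move=> HA HB; have : computable o (fun c => iteri (B c) (fun _ r => r.-1) (A c)).
  by computable_solve.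
by apply: eq_computable => c; elim: (B c) => [|n /= ->]; rewrite ?subn0 ?subnS.
Qed.
#[export] Hint Resolve computable_sub : computable.

Lemma computable_odd o A : computable o A -> computable o (fun c => odd (A c)).
Proof.
move=> HA; have : computable o (fun c => iteri (A c) (fun _ r => ncase r 1 (fun _ => 0)) 0).
  by computable_solve.
by apply: eq_computable => c; elim: (A c) => //= n ->; case: (odd n).
Qed.
#[export] Hint Resolve computable_odd : computable.

Lemma computable_half o A : computable o A -> computable o (fun c => (A c)./2).
Proof.
move=> HA; have : computable o
    (fun c => iteri (A c) (fun i r => ncase (odd i) r (fun _ => r.+1)) 0).
  by computable_solve.
apply: eq_computable => c; elim: (A c) => //= n ->.
by rewrite -[in RHS](odd_double_half n); case: (odd n); rewrite /= ?uphalf_double ?half_double.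
Qed.
#[export] Hint Resolve computable_half : computable.

Lemma computable_ifodd o N A B : computable o N -> computable o A -> computable o B ->
  computable o (fun c => if odd (N c) then A c else B c).
Proof.
move=> HN HA HB; have : computable o (fun c => ncase (odd (N c)) (B c) (fun _ => A c)).
  by computable_solve.
by apply: eq_computable => c; case: (odd (N c)).
Qed.
#[export] Hint Resolve computable_ifodd : computable.

Lemma computable_eqn o A B :
  computable o A -> computable o B -> computable o (fun c => A c == B c).
Proof.
move=> HA HB; have : computable o
    (fun c => ncase (A c - B c) (ncase (B c - A c) 1 (fun _ => 0)) (fun _ => 0)).
  by computable_solve.
apply: eq_computable => c; case: ltngtP => [lt|lt|->]; last by rewrite subnn.
  by rewrite -subn_gt0 in lt; case: (B c - A c) lt => //; case: (A c - B c).
by rewrite -subn_gt0 in lt; case: (A c - B c) lt.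
Qed.

Lemma computable_search o (E : nat -> nat -> nat) F :
  computable2 o E -> (forall c, exists t, E c t != 0) ->
  (forall c t v, E c t = v.+1 -> F c = v) -> computable o F.
Proof.
move=> HE halts sound.
have ex c : exists t, ncase (E c t) 1 (fun _ => 0) == 0.
  by have [t Et] := halts c; exists t; case: (E c t) Et.
have HM : computable o (fun c => ex_minn (ex c)).
  by apply: computable_minn; computable_solve.
have : computable o (fun c => (E c (ex_minn (ex c))).-1).
  by apply: computable_pred; exact (computable_app2 HE (computable_id o) HM).
apply: eq_computable => c; case: ex_minnP => t.
by case Et: (E c t) => [|v] // _ _; rewrite (sound _ _ _ Et).
Qed.

Lemma computable_iter o N (S : nat -> nat -> nat) B :
  computable o N -> computable2 o S -> computable o B ->
  computable o (fun c => iter (N c) (fun r => S c r) (B c)).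
Proof.
move=> HN HS HB; have : computable o (fun c => iteri (N c) (fun _ r => S c r) (B c)).
  by computable_solve.
by apply: eq_computable => c; elim: (N c) => //= n ->.
Qed.
#[export] Hint Resolve computable_iter : computable.

(** * Finite tables *)

Fixpoint code (s : seq nat) : nat :=
  if s is a :: s' then (cpair a (code s')).+1 else 0.

Definition lookup (tb q : nat) : nat :=
  ncase (iter q (fun r => ncase r 0 (fun r' => csnd r')) tb) 0 (fun r' => cfst r').

Lemma lookup_code s q : lookup (code s) q = nth 0 s q.
Proof.
rewrite /lookup; elim: s q => [|a s IH] [|q].
- by [].
- by rewrite iter_fix.
- by rewrite /= cfst_pair.
- by rewrite iterSr /= csnd_pair IH.
Qed.

Definition build (t : nat) (F : nat -> nat) : nat :=
  iteri t (fun j r => (cpair (F (t - j.+1)) r).+1) 0.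

Lemma build_code t F : build t F = code (mkseq F t).
Proof.
have suffix j : j <= t ->
    iteri j (fun j r => (cpair (F (t - j.+1)) r).+1) 0 = code (drop (t - j) (mkseq F t)).
  elim: j => [|j IH] lejt /=; first by rewrite subn0 drop_oversize ?size_mkseq.
  have ltj : t - j.+1 < t by lia.
  rewrite IH ?(ltnW lejt) // [in RHS](drop_nth 0) ?size_mkseq // nth_mkseq //=.
  by have -> : (t - j.+1).+1 = t - j by lia.
by rewrite /build suffix // subnn drop0.
Qed.

Lemma lookup_build t F q : lookup (build t F) q = if q < t then F q else 0.
Proof.
rewrite build_code lookup_code; case: ltnP => [|le_tq]; first exact: nth_mkseq.
by rewrite nth_default ?size_mkseq.
Qed.

Lemma computable_lookup o T Q :
  computable o T -> computable o Q -> computable o (fun c => lookup (T c) (Q c)).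
Proof. by move=> HT HQ; rewrite /lookup; computable_solve. Qed.
#[export] Hint Resolve computable_lookup : computable.

Lemma computable_build o T (F : nat -> nat -> nat) :
  computable o T -> computable2 o F -> computable o (fun c => build (T c) (fun q => F c q)).
Proof. by move=> HT HF; rewrite /build; computable_solve. Qed.
#[export] Hint Resolve computable_build : computable.

(** * A bounded interpreter and the use principle *)

Notation nbind r F := (ncase r 0 F).

(* The search state is 0 while searching, 1 once [F] failed to return a value
   and [y.+2] once [F y] returned 0, where [F] returns [v.+1] for a value [v]. *)
Definition mu_step (F : nat -> nat) (j r : nat) : nat :=
  ncase r (ncase (F j) 1 (fun w => ncase w j.+2 (fun _ => 0))) (fun r' => r'.+1).

Definition mu_search (F : nat -> nat) (k : nat) : nat := (iteri k (mu_step F) 0).-1.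

Lemma computable_mu_search o (F : nat -> nat -> nat) K :
  computable2 o F -> computable o K ->
  computable o (fun c => mu_search (fun j => F c j) (K c)).
Proof. by move=> HF HK; rewrite /mu_search /mu_step; computable_solve. Qed.
#[export] Hint Resolve computable_mu_search : computable.

Section MuSearch.
Variable F : nat -> nat.

Lemma mu_state_inv j :
  (iteri j (mu_step F) 0 = 0 -> forall z, z < j -> 1 < F z) /\
  (forall y, iteri j (mu_step F) 0 = y.+2 -> F y = 1 /\ forall z, z < y -> 1 < F z).
Proof.
elim: j => [|j [IH0 IH2]] //=; rewrite {1 3}/mu_step.
case Ej: (iteri j _ 0) => [|r] /=; last by split=> // y [Er]; apply: IH2; rewrite Ej Er.
case EF: (F j) => [|[|w]] //=; first by split=> // y [<-]; split=> //; exact: IH0.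
split=> // _ z; rewrite ltnS leq_eqVlt => /predU1P[->|]; [by rewrite EF | exact: IH0].
Qed.

Lemma mu_searchP k y : mu_search F k = y.+1 -> F y = 1 /\ forall z, z < y -> 1 < F z.
Proof.
by rewrite /mu_search; case Ek: (iteri k _ 0) => [|[|r]] //= [<-]; apply: (mu_state_inv k).2.
Qed.

Lemma mu_search_first k y : y < k -> F y = 1 -> (forall z, z < y -> 1 < F z) ->
  mu_search F k = y.+1.
Proof.
move=> ltyk Fy1 Fgt1.
have searching j : j <= y -> iteri j (mu_step F) 0 = 0.
  elim: j => [|j IH] //= ltjy; rewrite IH 1?ltnW //= /mu_step /=.
  by case: (F j) (Fgt1 j ltjy) => [|[|w]].
have found j : y < j -> iteri j (mu_step F) 0 = y.+2.
  elim: j => [|j IH] //; rewrite ltnS leq_eqVlt => /predU1P[<-|/IH /= ->] //=.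
  by rewrite searching //= /mu_step Fy1.
by rewrite /mu_search found.
Qed.

End MuSearch.

(* [run g p k x tb] runs [p] on [x] against the oracle [join g h] when [h] is
   only known through the finite table [tb] and every unbounded search is cut
   off at [k]: the result [v] is returned as [v.+1], failure as [0]. *)
Fixpoint run g (p : prog) (k x tb : nat) : nat :=
  match p with
  | PZero => 1
  | PSucc => x.+2
  | PId => x.+1
  | POrc => if odd x then lookup tb x./2 else (g x./2).+1
  | PFst => (cfst x).+1
  | PSnd => (csnd x).+1
  | PComp h q => nbind (run g q k x tb) (fun v => run g h k v tb)
  | PPair a b =>
      nbind (run g a k x tb) (fun u => nbind (run g b k x tb) (fun v => (cpair u v).+1))
  | PRec b s => iteri (csnd x)
      (fun i r => nbind r (fun r' => run g s k (cpair (cfst x) (cpair i r')) tb))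
      (run g b k (cfst x) tb)
  | PMu t => mu_search (fun j => run g t k (cpair x j) tb) k
  end.

Lemma computable_run o g p K X T : computable o g ->
  computable o K -> computable o X -> computable o T ->
  computable o (fun c => run g p (K c) (X c) (T c)).
Proof.
by move=> Hg; elim: p K X T => /= *; computable_solve.
Qed.
#[export] Hint Resolve computable_run : computable.

Definition table_within (tb : nat) h := forall q w, lookup tb q = w.+1 -> h q = w.

Lemma run_sound g h p k x tb v : table_within tb h ->
  run g p k x tb = v.+1 -> eval (join g h) p x v.
Proof.
move=> Htb; elim: p k x v => [| | | | | |h' IHh q IHq|a IHa b IHb|b IHb s IHs|t IHt] k x v /=.
- by case=> <-; constructor.
- by case=> <-; constructor.
- by case=> <-; constructor.
- move=> Ex; suff -> : v = join g h x by constructor.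
  by rewrite /join; case: (odd x) Ex => [/Htb|[]].
- by case=> <-; constructor.
- by case=> <-; constructor.
- by case E1: (run g q k x tb) => [|y] //= E2; econstructor; [apply: IHq E1 | apply: IHh E2].
- case E1: (run g a k x tb) => [|u] //=; case E2: (run g b k x tb) => [|w] //= [<-].
  by constructor; [apply: IHa E1 | apply: IHb E2].
- rewrite -[X in eval _ _ X _](cpair_eta x).
  elim: (csnd x) v => [|y IH] v /=; first by move/IHb/eRec0.
  by case E1: (iteri y _ _) => [|r] //= /IHs; apply: eRecS (IH _ E1).
- case/mu_searchP=> /IHt H0 Hlt; constructor=> // z /Hlt.
  by case: (run g t k _ tb) (IHt k (cpair x z)) => [|[|w]] // /(_ _ erefl) Hz _; exists w.+1.
Qed.

Definition tabulates (tb : nat) h (N : nat) := forall q, q < N -> lookup tb q = (h q).+1.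

Definition runs_to g h p x v (N : nat) :=
  forall k tb, N <= k -> tabulates tb h N -> run g p k x tb = v.+1.

Lemma runs_to_run g h p x v N M k tb : runs_to g h p x v N ->
  N <= M -> M <= k -> tabulates tb h M -> run g p k x tb = v.+1.
Proof.
move=> HN leNM leMk Htb; apply: HN; first exact: leq_trans leMk.
by move=> q ltqN; apply/Htb/(leq_trans ltqN).
Qed.

Lemma runs_to_mono g h p x v N M : N <= M -> runs_to g h p x v N -> runs_to g h p x v M.
Proof. by move=> leNM HN k tb leMk; apply: runs_to_run HN leNM leMk. Qed.

Lemma uniform_bound (P : nat -> nat -> Prop) y :
  (forall z N N', N <= N' -> P z N -> P z N') ->
  (forall z, z < y -> exists N, P z N) -> exists N, forall z, z < y -> P z N.
Proof.
move=> Pmono; elim: y => [|y IH] HP; first by exists 0.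
have [N HN] := IH (fun z ltzy => HP z (ltnW ltzy)).
have [Ny HNy] := HP y (ltnSn y).
exists (maxn N Ny) => z; rewrite ltnS leq_eqVlt => /predU1P[->|ltzy].
  exact: Pmono (leq_maxr N Ny) HNy.
exact: Pmono (leq_maxl N Ny) (HN z ltzy).
Qed.

Lemma run_complete g h p x v : eval (join g h) p x v -> exists N, runs_to g h p x v N.
Proof.
elim/eval_nested_ind; try by exists 0.
- move=> y; exists y.+1 => k tb _ Htb /=; rewrite /join; case: ifP => // _.
  by apply: Htb; rewrite ltnS leq_half_double -addnn; lia.
- move=> h' q y z w _ [N1 H1] _ [N2 H2]; exists (N1 + N2) => k tb leNk Htb /=.
  rewrite (runs_to_run H1 (leq_addr N2 N1) leNk Htb) /=.
  by rewrite (runs_to_run H2 (leq_addl N1 N2) leNk Htb).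
- move=> a b y u w _ [N1 H1] _ [N2 H2]; exists (N1 + N2) => k tb leNk Htb /=.
  rewrite (runs_to_run H1 (leq_addr N2 N1) leNk Htb) /=.
  by rewrite (runs_to_run H2 (leq_addl N1 N2) leNk Htb).
- move=> b s y w _ [N HN]; exists N => k tb leNk Htb /=.
  by rewrite cfst_pair csnd_pair /= HN.
- move=> b s y n r w _ [N1 H1] _ [N2 H2]; exists (N1 + N2) => k tb leNk Htb.
  move: (runs_to_run H1 (leq_addr N2 N1) leNk Htb) => /=.
  rewrite !cfst_pair !csnd_pair /= => ->.
  by rewrite /= (runs_to_run H2 (leq_addl N1 N2) leNk Htb).
- move=> t y n _ [N0 H0] Hlt.
  have [Nz HNz] : exists Nz, forall z, z < n ->
      exists2 w, w <> 0 & runs_to g h t (cpair y z) w Nz.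
    apply: uniform_bound => [z N M leNM [w w0 Hw]|z /Hlt[w [_ w0 [N HN]]]].
      by exists w => //; apply: runs_to_mono Hw.
    by exists N, w.
  exists (N0 + Nz + n.+1) => k tb leNk Htb /=; apply: mu_search_first.
  + by apply: leq_trans leNk; rewrite leq_addl.
  + by apply: (runs_to_run H0 _ leNk Htb); rewrite -addnA leq_addr.
  + move=> z /HNz[[|w] // _ Hw]; rewrite (runs_to_run Hw _ leNk Htb) //.
    by rewrite addnAC leq_addl.
Qed.

Definition graph_table h (N : nat) : nat := build N (fun q => (h q).+1).

Lemma tabulates_graph h N : tabulates (graph_table h N) h N.
Proof. by move=> q ltqN; rewrite lookup_build ltqN. Qed.

Lemma table_within_graph h N : table_within (graph_table h N) h.
Proof. by move=> q w; rewrite lookup_build; case: ifP => // _ [<-]. Qed.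

Lemma eval_join_det g h p x v1 v2 :
  eval (join g h) p x v1 -> eval (join g h) p x v2 -> v1 = v2.
Proof.
move=> /run_complete[N1 H1] /run_complete[N2 H2].
have Htb := @tabulates_graph h (N1 + N2).
have := runs_to_run H1 (leq_addr N2 N1) (leqnn _) Htb.
by rewrite (runs_to_run H2 (leq_addl N1 N2) (leqnn _) Htb) => -[].
Qed.

Lemma computable_app o g (H out : nat -> nat -> nat) Q :
  computable o g -> computable2 o H ->
  (forall n m, eval (join g (H n)) Q m (out n m)) -> computable2 o out.
Proof.
move=> Hg HH Hout.
apply: (computable_search (E := fun c t => run g Q t (csnd c) (graph_table (H (cfst c)) t))).
- by rewrite /graph_table; computable_solve.
- move=> c; have [N HN] := run_complete (Hout (cfst c) (csnd c)).
  by exists N; rewrite (runs_to_run HN (leqnn N) (leqnn N) (@tabulates_graph _ _)).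
- move=> c t v /(run_sound (@table_within_graph _ _)) Hv.
  exact: eval_join_det (Hout _ _) Hv.
Qed.

Section Iterates.
Variables (o s : nat -> nat) (H : nat -> nat -> nat) (P : prog).
Hypothesis Hs : computable o s.
Hypothesis HH0 : computable o (H 0).
Hypothesis HHS : forall n m, eval (join s (H n)) P m (H n.+1 m).

Definition iterates_table (t n : nat) : nat :=
  iteri n (fun _ tb => build t (fun m => run s P t m tb)) (graph_table (H 0) t).

Lemma table_within_iterates t n : table_within (iterates_table t n) (H n).
Proof.
elim: n => [|n IH] m w /=; first exact: table_within_graph.
rewrite lookup_build; case: ifP => // _ /(run_sound IH).
exact: eval_join_det (HHS n m).
Qed.

Lemma tabulates_iterates n B :
  exists T, forall t, T <= t -> tabulates (iterates_table t n) (H n) B.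
Proof.
elim: n B => [|n IH] B.
  by exists B => t leBt m ltmB; rewrite lookup_build (leq_trans ltmB leBt).
have [N HN] : exists N, forall m, m < B -> runs_to s (H n) P m (H n.+1 m) N.
  apply: uniform_bound => [m N M|m _]; first exact: runs_to_mono.
  exact: run_complete (HHS n m).
have [T HT] := IH N.
exists (T + N + B) => t leTt m ltmB /=.
rewrite lookup_build (leq_trans ltmB) ?(leq_trans _ leTt) ?leq_addl //.
apply: (runs_to_run (HN m ltmB) (leqnn N)).
  by apply: leq_trans leTt; rewrite addnAC leq_addl.
by apply: HT; apply: leq_trans leTt; rewrite -addnA leq_addr.
Qed.

Lemma computable_iterates : computable2 o H.
Proof.
apply: (computable_search (E := fun c t => lookup (iterates_table t (cfst c)) (csnd c))).
- by rewrite /iterates_table /graph_table; computable_solve.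
- move=> c; have [T HT] := tabulates_iterates (cfst c) (csnd c).+1.
  by exists T; rewrite HT.
- by move=> c t v /table_within_iterates.
Qed.

End Iterates.

(** * Embeddings of K_2^X into K_2^Y *)

Lemma ZcomputableP Z g : Zcomputable Z g <-> computable (chi Z) g.
Proof.
split=> [[e He]|[p Hp]]; first by exists (prog_of_index e).
by exists (pickle p) => n; rewrite /Phi /prog_of_index pickleK.
Qed.

Lemma Zcomputable_trans X Y g : Treducible X Y -> Zcomputable X g -> Zcomputable Y g.
Proof. by rewrite /Treducible !ZcomputableP; apply: computable_trans. Qed.

Lemma K2_sval_inj Z : injective (@sval _ _ : K2 Z -> nat -> nat).
Proof.
by move=> [a Ha] [b Hb] /= eq_ab; subst b; rewrite (proof_irrelevance _ Ha Hb).
Qed.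

Definition K2_incl X Y (XY : Treducible X Y) (a : K2 X) : K2 Y :=
  exist _ (sval a) (Zcomputable_trans XY (proj2_sig a)).

Lemma K2_incl_embedding X Y (XY : Treducible X Y) : K2_embedding (K2_incl XY).
Proof. by split=> [a b /(congr1 sval) /= /K2_sval_inj|]. Qed.

Definition K2const Z (k : nat) : K2 Z :=
  exist _ (fun _ => k) (proj2 (ZcomputableP Z _) (computable_const _ k)).
Arguments K2const : clear implicits.

Definition one_prog : prog := PComp PSucc PZero.

Lemma eval_one_prog o x : eval o one_prog x 1.
Proof. exact: eComp (eZero _ _) (eSucc _ _). Qed.

Definition succ_prog : prog := PComp PSucc (PComp PSucc (PComp POrc one_prog)).

Definition char_prog : prog := PComp POrc (PComp POrc one_prog).

Section Numerals.
Variable X : nat -> bool.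

(* The constant 2n+2 stands for n: querying the oracle at it reads entry n+1
   of the left operand. *)
Definition numeral (n : nat) : K2 X := K2const X n.*2.+2.

Definition K2succ : K2 X := K2const X (pickle succ_prog).

Lemma K2app_succ n : K2app K2succ (numeral n) (numeral n.+1).
Proof.
move=> m; rewrite /Phi /= /prog_of_index pickleK.
exact: eComp (eComp (eComp (eval_one_prog _ _) (eOrc _ _)) (eSucc _ _)) (eSucc _ _).
Qed.

Definition char_with_prog (m : nat) : nat := ncase m (pickle char_prog) (fun k => chi X k).

Lemma char_with_prog_Zcomputable : Zcomputable X char_with_prog.
Proof. by apply/ZcomputableP; rewrite /char_with_prog; computable_solve. Qed.

Definition K2char : K2 X := exist _ char_with_prog char_with_prog_Zcomputable.

Lemma K2app_char n : K2app K2char (numeral n) (K2const X (chi X n)).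
Proof.
move=> m; rewrite /Phi /= /prog_of_index pickleK.
have -> : chi X n = join char_with_prog (fun _ => n.*2.+2) n.*2.+2.
  by rewrite /join /= odd_double /= doubleK.
exact: eComp (eComp (eval_one_prog _ _) (eOrc _ _)) (eOrc _ _).
Qed.

End Numerals.

Section Embedding.
Variables (X Y : nat -> bool) (f : K2 X -> K2 Y).
Hypothesis f_embedding : K2_embedding f.

Let computable_f a : computable (chi Y) (sval (f a)).
Proof. exact/ZcomputableP/(proj2_sig (f a)). Qed.

Lemma computable_f_numerals : computable2 (chi Y) (fun n => sval (f (numeral X n))).
Proof.
apply: (computable_iterates (s := sval (f (K2succ X)))
  (P := prog_of_index (sval (f (K2succ X)) 0))).
- exact: computable_f.
- exact: computable_f.
- by move=> n m; apply: f_embedding.2 (@K2app_succ X n) m.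
Qed.

Lemma computable_f_chars : computable2 (chi Y) (fun n => sval (f (K2const X (chi X n)))).
Proof.
apply: (computable_app (g := sval (f (K2char X)))
  (Q := prog_of_index (sval (f (K2char X)) 0))).
- exact: computable_f.
- exact: computable_f_numerals.
- by move=> n m; apply: f_embedding.2 (@K2app_char X n) m.
Qed.

Lemma f_separates_01 : exists m, sval (f (K2const X 1)) m <> sval (f (K2const X 0)) m.
Proof.
apply: not_all_ex_not => eq10.
have /f_embedding.1/(congr1 (fun a => sval a 0)) // : f (K2const X 1) = f (K2const X 0).
exact/K2_sval_inj/functional_extensionality.
Qed.

Lemma embedding_Treducible : Treducible X Y.
Proof.
have [m0 neq10] := f_separates_01.
have decide_X : computable (chi Y)
    (fun n => sval (f (K2const X (chi X n))) m0 == sval (f (K2const X 1)) m0).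
  apply: computable_eqn; last exact: computable_const.
  exact (computable_app2 computable_f_chars (computable_id _) (computable_const _ m0)).
apply/ZcomputableP; apply: eq_computable decide_X => n.
by rewrite /chi; case: (X n) => /=; [rewrite eqxx | case: eqP => // /esym /neq10].
Qed.

End Embedding.

Theorem theorem6p6 (X Y : nat -> bool) :
  (exists f : K2 X -> K2 Y, K2_embedding f) <-> Treducible X Y.
Proof.
split=> [[f /embedding_Treducible] //|XY].
by exists (K2_incl XY); apply: K2_incl_embedding.
Qed.
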